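(* Let $\mathcal{C}$ be a category and $F\colon\mathcal{C}\to\mathcal{E}ns$ a functor satisfying Grothendieck's axioms G0–G6 below (in either variant). Then the full subcategory $\mathcal{C}on(\mathcal{C})$ of non-empty connected objects of $\mathcal{C}$, together with the restriction of $F$ to it, satisfies the axioms C0–C3 below.
   Context: An arrow $f\colon X\to Y$ is a strict epimorphism if for every $g\colon X\to Z$ compatible with $f$ (for all objects $C$ and $u,v\colon C\to X$, $f\circ u=f\circ v$ implies $g\circ u=g\circ v$) there is a unique $k$ with $g=k\circ f$. For a group $H$ acting on an object $X$ by automorphisms (homomorphism $H\to\mathrm{Aut}(X)^{op}$) the quotient $q\colon X\to X/H$ is universal among arrows with $q\circ h=q$ for all $h\in H$. An object $X$ is finite if $F(X)$ is finite. An object $A$ is connected if $A\cong A_1\amalg A_2$ implies $A_1$ or $A_2$ is initial; non-empty means not initial. Grothendieck's axioms (two variants: ''coproducts'' in G2, G5 means either arbitrary small coproducts, or only finite coproducts): G0: for every $X$ and $x\in F(X)$ there are a finite object $Y$, $y\in F(Y)$ and $f\colon Y\to X$ with $F(f)(y)=x$. G1: $\mathcal{C}$ has a terminal object and fibre products. G2: $\mathcal{C}$ has an initial object, coproducts, and quotients of objects by actions of finite groups. G3: every $f\colon X\to Y$ factors as a strict epimorphism $X\to I$ followed by a monomorphism $I\to Y$, and there is a subobject $J\to Y$ with $I\amalg J\cong Y$ via the induced map. G4: $F$ preserves finite limits. G5: $F$ preserves the initial object, coproducts, quotients by actions of finite groups, and sends strict epimorphisms to surjections. G6: $F$ reflects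 isomorphisms. For a pair $(\mathcal{D},F)$, the diagram $\Gamma_F$ has objects $(a,A)$, $a\in F(A)$, and morphisms $(a,A)\to(a',A')$ the arrows $f$ with $F(f)(a)=a'$, preordered by existence of morphisms. Axioms C0–C3 for $(\mathcal{D},F)$: C0: $F(A)\neq\emptyset$ for all $A$ and every arrow of $\mathcal{D}$ is a strict epimorphism. C1: for every $A$ and finite group $H$ acting on $A$, the quotient $A\to A/H$ exists in $\mathcal{D}$ and $F(A)/H\to F(A/H)$ is bijective. C2: each $F(A)$ is finite and $F$ sends strict epimorphisms to surjections. C3: every finite family of objects of $\Gamma_F$ has a meet. *)

From HB Require Import structures.
From Stdlib Require List.
From mathcomp Require Import all_boot fingroup.
Set Implicit Arguments. Unset Strict Implicit. Unset Printing Implicit Defensive.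

Record Category := Cat {
  Ob :> Type;
  Hom : Ob -> Ob -> Type;
  idm : forall A, Hom A A;
  comp : forall A B D, Hom B D -> Hom A B -> Hom A D;
  comp_id_l : forall A B (f : Hom A B), comp (idm B) f = f;
  comp_id_r : forall A B (f : Hom A B), comp f (idm A) = f;
  comp_assoc : forall A B D E (h : Hom D E) (g : Hom B D) (f : Hom A B),
      comp h (comp g f) = comp (comp h g) f }.
Arguments Hom {c} _ _.
Arguments idm {c} A.
Arguments comp {c A B D} _ _.

Record SetFunctor (C : Category) := SF {
  Fo : C -> Type;
  Fm : forall A B : C, Hom A B -> Fo A -> Fo B;
  Fm_id : forall A x, Fm (idm A) x = x;
  Fm_comp : forall A B D (g : Hom B D) (f : Hom A B) x,
      Fm (comp g f) x = Fm g (Fm f x) }.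
Arguments Fo {C} _ _.
Arguments Fm {C} _ {A B} _ _.

Definition finite_type (T : Type) : Prop := exists s : seq T, forall x, Stdlib.Lists.List.In x s.
Definition surjective (S T : Type) (f : S -> T) : Prop := forall y, exists x, f x = y.
Definition bijective_fun (S T : Type) (f : S -> T) : Prop :=
  (forall x y, f x = f y -> x = y) /\ surjective f.

Section Notions.
Variable C : Category.

Definition mono (X Y : C) (f : Hom X Y) : Prop :=
  forall (Z : C) (u v : Hom Z X), comp f u = comp f v -> u = v.

Definition iso (X Y : C) (f : Hom X Y) : Prop :=
  exists g : Hom Y X, comp g f = idm X /\ comp f g = idm Y.

Definition isomorphic (X Y : C) : Prop := exists f : Hom X Y, iso f.

Definition compatible (X Y Z : C) (f : Hom X Y) (g : Hom X Z) : Prop :=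
  forall (W : C) (u v : Hom W X), comp f u = comp f v -> comp g u = comp g v.

Definition strict_epi (X Y : C) (f : Hom X Y) : Prop :=
  forall (Z : C) (g : Hom X Z), compatible f g ->
    exists k : Hom Y Z, g = comp k f /\ forall k' : Hom Y Z, g = comp k' f -> k' = k.

Definition initial (I : C) : Prop :=
  forall Z : C, exists f : Hom I Z, forall g : Hom I Z, g = f.

Definition terminal (T : C) : Prop :=
  forall Z : C, exists f : Hom Z T, forall g : Hom Z T, g = f.

Definition nonempty (A : C) : Prop := ~ initial A.

Definition is_pullback (X Y S P : C) (f : Hom X S) (g : Hom Y S)
    (p1 : Hom P X) (p2 : Hom P Y) : Prop :=
  comp f p1 = comp g p2 /\
  forall (Z : C) (u : Hom Z X) (v : Hom Z Y), comp f u = comp g v ->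
    exists k : Hom Z P, (comp p1 k = u /\ comp p2 k = v) /\
      forall k' : Hom Z P, comp p1 k' = u -> comp p2 k' = v -> k' = k.

Definition is_coprod (I : Type) (A : I -> C) (S : C) (inj : forall i, Hom (A i) S) : Prop :=
  forall (Z : C) (f : forall i, Hom (A i) Z),
    exists k : Hom S Z, (forall i, comp k (inj i) = f i) /\
      forall k' : Hom S Z, (forall i, comp k' (inj i) = f i) -> k' = k.

Definition is_coprod2 (A1 A2 S : C) (i1 : Hom A1 S) (i2 : Hom A2 S) : Prop :=
  forall (Z : C) (f1 : Hom A1 Z) (f2 : Hom A2 Z),
    exists k : Hom S Z, (comp k i1 = f1 /\ comp k i2 = f2) /\
      forall k' : Hom S Z, comp k' i1 = f1 -> comp k' i2 = f2 -> k' = k.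

Definition connected (A : C) : Prop :=
  forall (A1 A2 S : C) (i1 : Hom A1 S) (i2 : Hom A2 S),
    is_coprod2 i1 i2 -> isomorphic S A -> initial A1 \/ initial A2.

(* action of a finite group gT on X: a homomorphism gT -> Aut(X)^op *)
Definition is_action (gT : finGroupType) (X : C) (act : gT -> Hom X X) : Prop :=
  act 1%g = idm X /\ forall g h : gT, act (g * h)%g = comp (act h) (act g).

Definition is_quotient (gT : finGroupType) (X : C) (act : gT -> Hom X X)
    (Q : C) (q : Hom X Q) : Prop :=
  (forall h, comp q (act h) = q) /\
  forall (Z : C) (g : Hom X Z), (forall h, comp g (act h) = g) ->
    exists k : Hom Q Z, g = comp k q /\ forall k' : Hom Q Z, g = comp k' q -> k' = k.

Record Diagram (J : Category) := Dgm {
  Do : J -> C;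
  Dm : forall a b : J, Hom a b -> Hom (Do a) (Do b);
  Dm_id : forall a, Dm (idm a) = idm (Do a);
  Dm_comp : forall a b c (g : Hom b c) (f : Hom a b), Dm (comp g f) = comp (Dm g) (Dm f) }.

Definition finite_category (J : Category) : Prop :=
  finite_type J /\ forall a b : J, finite_type (Hom a b).

Definition is_cone (J : Category) (D : Diagram J) (L : C) (leg : forall j, Hom L (Do D j)) : Prop :=
  forall (a b : J) (u : Hom a b), comp (Dm D u) (leg a) = leg b.

Definition is_limit (J : Category) (D : Diagram J) (L : C) (leg : forall j, Hom L (Do D j)) : Prop :=
  is_cone leg /\
  forall (Z : C) (c : forall j, Hom Z (Do D j)), is_cone c ->
    exists k : Hom Z L, (forall j, comp (leg j) k = c j) /\
      forall k' : Hom Z L, (forall j, comp (leg j) k' = c j) -> k' = k.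

End Notions.

Section Preservation.
Variables (C : Category) (F : SetFunctor C).

Definition preserves_limit (J : Category) (D : Diagram C J) (L : C)
    (leg : forall j, Hom L (Do D j)) : Prop :=
  forall (Z : Type) (c : forall j, Z -> Fo F (Do D j)),
    (forall (a b : J) (u : Hom a b) z, Fm F (Dm D u) (c a z) = c b z) ->
    exists k : Z -> Fo F L, (forall j z, Fm F (leg j) (k z) = c j z) /\
      forall k' : Z -> Fo F L, (forall j z, Fm F (leg j) (k' z) = c j z) ->
        forall z, k' z = k z.

Definition preserves_finite_limits : Prop :=
  forall (J : Category) (D : Diagram C J) (L : C) (leg : forall j, Hom L (Do D j)),
    finite_category J -> is_limit leg -> preserves_limit leg.

Definition preserves_coprod (I : Type) (A : I -> C) (S : C) (inj : forall i, Hom (A i) S) : Prop :=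
  forall (Z : Type) (f : forall i, Fo F (A i) -> Z),
    exists k : Fo F S -> Z, (forall i x, k (Fm F (inj i) x) = f i x) /\
      forall k' : Fo F S -> Z, (forall i x, k' (Fm F (inj i) x) = f i x) ->
        forall y, k' y = k y.

(* the canonical map F(X)/H -> F(Q) is bijective *)
Definition preserves_quotient (gT : finGroupType) (X : C) (act : gT -> Hom X X)
    (Q : C) (q : Hom X Q) : Prop :=
  surjective (Fm F q) /\
  forall x y : Fo F X, Fm F q x = Fm F q y <-> exists h : gT, Fm F (act h) x = y.

Definition finite_obj (X : C) : Prop := finite_type (Fo F X).

End Preservation.

(* arb = true : arbitrary small coproducts; arb = false : only finite coproducts *)
Definition admissible_index (arb : bool) (I : Type) : Prop :=
  if arb then True else finite_type I.

Definition G0 (C : Category) (F : SetFunctor C) : Prop :=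
  forall (X : C) (x : Fo F X), exists (Y : C) (y : Fo F Y) (f : Hom Y X),
    finite_obj F Y /\ Fm F f y = x.

Definition G1 (C : Category) : Prop :=
  (exists T : C, terminal T) /\
  forall (X Y S : C) (f : Hom X S) (g : Hom Y S),
    exists (P : C) (p1 : Hom P X) (p2 : Hom P Y), is_pullback f g p1 p2.

Definition G2 (arb : bool) (C : Category) : Prop :=
  (exists I : C, initial I) /\
  (forall (I : Type) (A : I -> C), admissible_index arb I ->
     exists (S : C) (inj : forall i, Hom (A i) S), is_coprod inj) /\
  (forall (gT : finGroupType) (X : C) (act : gT -> Hom X X), is_action act ->
     exists (Q : C) (q : Hom X Q), is_quotient act q).

Definition G3 (C : Category) : Prop :=
  forall (X Y : C) (f : Hom X Y),
    exists (I : C) (e : Hom X I) (m : Hom I Y),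
      strict_epi e /\ mono m /\ f = comp m e /\
      exists (J : C) (j : Hom J Y), mono j /\
        exists (S : C) (i1 : Hom I S) (i2 : Hom J S) (u : Hom S Y),
          is_coprod2 i1 i2 /\ comp u i1 = m /\ comp u i2 = j /\ iso u.

Definition G4 (C : Category) (F : SetFunctor C) : Prop := preserves_finite_limits F.

Definition G5 (arb : bool) (C : Category) (F : SetFunctor C) : Prop :=
  (forall I : C, initial I -> Fo F I -> False) /\
  (forall (I : Type) (A : I -> C) (S : C) (inj : forall i, Hom (A i) S),
     admissible_index arb I -> is_coprod inj -> preserves_coprod F inj) /\
  (forall (gT : finGroupType) (X : C) (act : gT -> Hom X X) (Q : C) (q : Hom X Q),
     is_action act -> is_quotient act q -> preserves_quotient F act q) /\
  (forall (X Y : C) (f : Hom X Y), strict_epi f -> surjective (Fm F f)).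

Definition G6 (C : Category) (F : SetFunctor C) : Prop :=
  forall (X Y : C) (f : Hom X Y), bijective_fun (Fm F f) -> iso f.

Definition Grothendieck (arb : bool) (C : Category) (F : SetFunctor C) : Prop :=
  G0 F /\ G1 C /\ G2 arb C /\ G3 C /\ G4 F /\ G5 arb F /\ G6 F.

Section ConCat.
Variable C : Category.

Definition ConOb := {A : C | nonempty A /\ connected A}.

Definition ConCat : Category :=
  @Cat ConOb (fun a b => Hom (proj1_sig a) (proj1_sig b))
    (fun a => idm (proj1_sig a))
    (fun a b d g f => comp g f)
    (fun a b f => comp_id_l f)
    (fun a b f => comp_id_r f)
    (fun a b d e h g f => comp_assoc h g f).

Variable F : SetFunctor C.

Definition ConRestr : SetFunctor ConCat :=
  @SF ConCat (fun a => Fo F (proj1_sig a))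
    (fun a b f x => Fm F f x)
    (fun a x => @Fm_id C F _ x)
    (fun a b d g f x => @Fm_comp C F _ _ _ g f x).
End ConCat.

Section CAxioms.
Variables (D : Category) (F : SetFunctor D).

Definition C0 : Prop :=
  (forall A : D, inhabited (Fo F A)) /\
  (forall (A B : D) (f : Hom A B), strict_epi f).

Definition C1 : Prop :=
  forall (gT : finGroupType) (A : D) (act : gT -> Hom A A), is_action act ->
    exists (Q : D) (q : Hom A Q), is_quotient act q /\ preserves_quotient F act q.

Definition C2 : Prop :=
  (forall A : D, finite_type (Fo F A)) /\
  (forall (A B : D) (f : Hom A B), strict_epi f -> surjective (Fm F f)).

(* The diagram Gamma_F, preordered by existence of morphisms:
   x <= y iff there is a morphism x -> y in Gamma_F *)
Definition GammaOb := {A : D & Fo F A}.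

Definition Gamma_le (x y : GammaOb) : Prop :=
  exists f : Hom (projT1 x) (projT1 y), Fm F f (projT2 x) = projT2 y.

Definition has_meet (l : seq GammaOb) : Prop :=
  exists m : GammaOb, (forall x, Stdlib.Lists.List.In x l -> Gamma_le m x) /\
    forall y : GammaOb, (forall x, Stdlib.Lists.List.In x l -> Gamma_le y x) -> Gamma_le y m.

Definition C3 : Prop := forall l : seq GammaOb, has_meet l.
End CAxioms.

From mathcomp Require Import all_boot fingroup.
From Stdlib Require Import Classical ClassicalEpsilon PropExtensionality.

(* Under G0-G6 an object X is initial iff F X is empty, and F turns binary
   coproducts into disjoint unions; so, by induction on the size of the fibre,
   every object with finite fibre is a finite coproduct of non-empty connected
   objects, each mapped into it injectively on fibres.  By G3 a map f : X -> A
   with F X non-empty and A connected is a strict epimorphism followed by a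
   coproduct summand that cannot miss anything, so f is a strict epimorphism
   and F f is onto; with G0 the fibres of connected objects are finite.
   A map out of A is compatible with f : A -> B in Con(C) once it coequalises
   the kernel pair of f, since that kernel pair is covered by its connected
   pieces, which lie in Con(C).  Quotients of connected objects and the
   terminal object are connected.  The meet of (a, A) and (b, B) in Gamma_F is
   the connected piece of A x B through (a, b): by G6, its pullback along any
   D -> A x B with D connected is an isomorphism onto D. *)

Set Implicit Arguments. Unset Strict Implicit. Unset Printing Implicit Defensive.

Lemma finite_type_surj (A B : Type) (f : A -> B) :
  surjective f -> finite_type A -> finite_type B.
Proof.
move=> fsurj [s sA]; exists (map f s) => b.
by have [a <-] := fsurj b; apply: List.in_map.
Qed.

Lemma finite_type_prod (A B : Type) :
  finite_type A -> finite_type B -> finite_type (A * B).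
Proof. by move=> [s sA] [t tB]; exists (List.list_prod s t) => -[a b]; apply/List.in_prod. Qed.

Section Preimage.
Variables (A B : Type) (f : A -> B).

Definition preim_opt (b : B) : option A :=
  match excluded_middle_informative (exists a, f a = b) with
  | left ex => Some (proj1_sig (constructive_indefinite_description _ ex))
  | right _ => None
  end.

Lemma preim_optP b a : preim_opt b = Some a -> f a = b.
Proof.
rewrite /preim_opt; case: excluded_middle_informative => // ex [<-].
exact: proj2_sig (constructive_indefinite_description _ ex).
Qed.

Lemma preim_opt_None b : preim_opt b = None -> forall a, f a <> b.
Proof.
rewrite /preim_opt; case: excluded_middle_informative => // nex _ a fab.
by apply: nex; exists a.
Qed.

Lemma In_pmap_preim_opt (s : seq B) a :
  injective f -> List.In (f a) s -> List.In a (pmap preim_opt s).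
Proof.
move=> finj; elim: s => //= b s IHs [-> | /IHs]; last by case: (preim_opt b) => /=; tauto.
case Efa: (preim_opt (f a)) => [a'|] /=; last by case: (preim_opt_None Efa erefl).
by left; apply: finj; rewrite (preim_optP Efa).
Qed.

Lemma size_pmap_preim_opt_lt (s : seq B) b :
  List.In b s -> (forall a, f a <> b) -> size (pmap preim_opt s) < size s.
Proof.
move=> sb nfb; rewrite size_pmap.
have preimb : preim_opt b = None.
  by case Eb: (preim_opt b) => [a|] //; case: (nfb a (preim_optP Eb)).
elim: s sb => //= b' s IHs [-> | /IHs]; first by rewrite preimb add0n ltnS count_size.
by case: (preim_opt b') => [_|] /= lt_s; rewrite ?add1n ?add0n ltnS // ltnW.
Qed.

End Preimage.

Lemma finite_type_inj (A B : Type) (f : A -> B) :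
  injective f -> finite_type B -> finite_type A.
Proof. by move=> finj [s sB]; exists (pmap (preim_opt f) s) => a; apply: In_pmap_preim_opt. Qed.

Section PreorderCategory.
Variables (O : Type) (le : rel O) (le_refl : reflexive le) (le_trans : transitive le).

Definition preorder_cat : Category :=
  @Cat O (fun a b => le a b) le_refl (fun a b c g f => le_trans f g)
    (fun _ _ _ => eq_irrelevance _ _) (fun _ _ _ => eq_irrelevance _ _)
    (fun _ _ _ _ _ _ _ => eq_irrelevance _ _).

Lemma preorder_cat_finite : finite_type O -> finite_category preorder_cat.
Proof.
move=> finO; split=> // a b /=; case: (le a b); last by exists [::].
by exists [:: erefl true] => p; left; apply: eq_irrelevance.
Qed.

End PreorderCategory.

Definition empty_cat : Category :=
  @preorder_cat Empty_set (fun _ _ => true) (fun _ => erefl) (fun _ _ _ _ _ => erefl).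

Lemma empty_cat_finite : finite_category empty_cat.
Proof. by apply: preorder_cat_finite; exists [::]; case. Qed.

(* [Some true] and [Some false] are the feet of the cospan, [None] its apex. *)
Definition cospan_le (a b : option bool) : bool := (b == None) || (a == b).

Lemma cospan_le_refl : reflexive cospan_le.
Proof. by move=> a; rewrite /cospan_le eqxx orbT. Qed.

Lemma cospan_le_trans : transitive cospan_le.
Proof. by move=> [[]|] [[]|] [[]|]. Qed.

Definition cospan_cat : Category := preorder_cat cospan_le_refl cospan_le_trans.

Lemma cospan_cat_finite : finite_category cospan_cat.
Proof.
by apply: preorder_cat_finite; exists [:: Some true; Some false; None] => -[[]|] /=; tauto.
Qed.

Section Shapes.
Variable C : Category.

Section Cospan.
Variables (X Y S : C) (f : Hom X S) (g : Hom Y S).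

Definition cospan_ob (o : cospan_cat) : C :=
  match o with Some true => X | Some false => Y | None => S end.

Definition cospan_hom (a b : cospan_cat) : Hom a b -> Hom (cospan_ob a) (cospan_ob b) :=
  match a, b return Hom (c := cospan_cat) a b -> Hom (cospan_ob a) (cospan_ob b) with
  | Some true, Some true => fun _ => idm X
  | Some false, Some false => fun _ => idm Y
  | None, None => fun _ => idm S
  | Some true, None => fun _ => f
  | Some false, None => fun _ => g
  | Some true, Some false | Some false, Some true | None, Some _ =>
      fun p => False_rect _ (Bool.diff_false_true p)
  end.

Lemma cospan_hom_id (a : cospan_cat) : cospan_hom (idm a) = idm (cospan_ob a).
Proof. by case: a => [[]|]. Qed.

Lemma cospan_hom_comp (a b c : cospan_cat) (v : Hom b c) (u : Hom a b) :
  cospan_hom (comp v u) = comp (cospan_hom v) (cospan_hom u).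
Proof. by move: v u; case: a b c => [[]|] [[]|] [[]|] //= v u; rewrite ?comp_id_l ?comp_id_r. Qed.

Definition cospan_diagram : Diagram C cospan_cat := Dgm cospan_hom_id cospan_hom_comp.

Variables (P : C) (p1 : Hom P X) (p2 : Hom P Y).

Definition pullback_leg (o : cospan_cat) : Hom P (cospan_ob o) :=
  match o with Some true => p1 | Some false => p2 | None => comp f p1 end.

Lemma pullback_is_limit :
  is_pullback f g p1 p2 -> is_limit (D := cospan_diagram) pullback_leg.
Proof.
move=> [fp1_gp2 pb_univ]; split.
  by move=> [[]|] [[]|] //= _; rewrite ?comp_id_l.
move=> Z c c_cone.
have cX := c_cone (Some true) None erefl; have cY := c_cone (Some false) None erefl.
have [k [[p1k p2k] k_uniq]] := pb_univ Z _ _ (etrans cX (esym cY)).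
exists k; split; first by case=> [[]|] //=; rewrite -comp_assoc p1k.
by move=> k' k'_legs; apply: k_uniq; [apply: (k'_legs (Some true)) | apply: (k'_legs (Some false))].
Qed.

End Cospan.

Section EmptyDiagram.
Variable T : C.

Definition empty_diagram : Diagram C empty_cat :=
  @Dgm C empty_cat (fun o => match o with end) (fun a _ _ => match a with end)
    (fun a => match a with end) (fun a _ _ _ _ => match a with end).

Definition empty_leg (o : empty_cat) : Hom T (Do empty_diagram o) := match o with end.

Lemma terminal_is_limit : terminal T -> is_limit empty_leg.
Proof.
move=> termT; split; first by case.
move=> Z c _; have [k k_uniq] := termT Z.
by exists k; split => [[]|k' _]; apply: k_uniq.
Qed.

End EmptyDiagram.
End Shapes.

Section CategoryFacts.
Variable C : Category.

Lemma initial_iso (I X : C) (u : Hom I X) : initial I -> iso u -> initial X.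
Proof.
move=> initI [v [vu uv]] Z; have [k k_uniq] := initI Z.
by exists (comp k v) => h; rewrite -[h]comp_id_r -uv comp_assoc (k_uniq (comp h u)).
Qed.

Lemma coprod2_hom_ext (A1 A2 S Z : C) (i1 : Hom A1 S) (i2 : Hom A2 S) (s t : Hom S Z) :
  is_coprod2 i1 i2 -> comp s i1 = comp t i1 -> comp s i2 = comp t i2 -> s = t.
Proof.
move=> coprod si1 si2; have [k [_ k_uniq]] := coprod Z (comp t i1) (comp t i2).
by rewrite (k_uniq s) // (k_uniq t).
Qed.

Lemma coprod2_iso (A1 A2 S K : C) (i1 : Hom A1 S) (i2 : Hom A2 S) (u : Hom S K) :
  is_coprod2 i1 i2 -> iso u -> is_coprod2 (comp u i1) (comp u i2).
Proof.
move=> coprod [v [vu uv]] Z f1 f2; have [k [[ki1 ki2] _]] := coprod Z f1 f2.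
exists (comp k v); split; first by rewrite -!comp_assoc !(comp_assoc v) vu !comp_id_l.
move=> k' k'i1 k'i2; rewrite -[k']comp_id_r -uv comp_assoc; congr comp.
by apply: (coprod2_hom_ext coprod); rewrite -comp_assoc ?k'i1 ?k'i2.
Qed.

Lemma coprod2_initial_iso (A1 A2 S : C) (i1 : Hom A1 S) (i2 : Hom A2 S) :
  is_coprod2 i1 i2 -> initial A2 -> iso i1.
Proof.
move=> coprod initA2; have [z _] := initA2 A1.
have [k [[ki1 _] _]] := coprod A1 (idm A1) z.
exists k; split => //; apply: (coprod2_hom_ext coprod).
  by rewrite -comp_assoc ki1 comp_id_l comp_id_r.
by have [z' z'_uniq] := initA2 S; rewrite (z'_uniq (comp _ i2)) (z'_uniq (comp _ i2)).
Qed.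

Lemma connected_coprod2 (K A1 A2 : C) (j1 : Hom A1 K) (j2 : Hom A2 K) :
  connected K -> is_coprod2 j1 j2 -> initial A1 \/ initial A2.
Proof.
move=> connK coprod; apply: connK coprod _.
by exists (idm K), (idm K); rewrite comp_id_l.
Qed.

Lemma strict_epi_iso_comp (X Y Z : C) (m : Hom Y Z) (e : Hom X Y) :
  iso m -> strict_epi e -> strict_epi (comp m e).
Proof.
move=> [n [nm mn]] epi_e W g g_compat.
have [k [gk k_uniq]] : exists k, g = comp k e /\ forall k', g = comp k' e -> k' = k.
  by apply: epi_e => V u v eu_ev; apply: g_compat; rewrite -!comp_assoc eu_ev.
exists (comp k n); split; first by rewrite gk -comp_assoc (comp_assoc n) nm comp_id_l.
move=> k' gk'; rewrite -[k']comp_id_r -mn comp_assoc; congr comp.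
by apply: k_uniq; rewrite gk' comp_assoc.
Qed.

End CategoryFacts.

Definition disjoint_union (X1 X2 S : Type) (j1 : X1 -> S) (j2 : X2 -> S) : Prop :=
  [/\ forall s, (exists x, j1 x = s) \/ (exists y, j2 y = s),
      injective j1, injective j2 & forall x y, j1 x <> j2 y].

(** * Fibres of finite limits and of coproducts *)

Section FibreFacts.
Variables (C : Category) (F : SetFunctor C).

Section FiniteLimits.
Hypothesis HG4 : G4 F.

Lemma Fo_terminal (T : C) : terminal T -> exists t : Fo F T, forall t', t' = t.
Proof.
move=> termT; have := HG4 empty_cat_finite (terminal_is_limit termT).
move=> /(_ unit (fun o => match o with end) (fun o => match o with end)) [k [_ k_uniq]].
by exists (k tt) => t'; apply: (k_uniq (fun _ => t') (fun o => match o with end) tt).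
Qed.

Variables (X Y S P : C) (f : Hom X S) (g : Hom Y S) (p1 : Hom P X) (p2 : Hom P Y).
Hypothesis pb : is_pullback f g p1 p2.

Let F_pb : preserves_limit F (D := cospan_diagram f g) (pullback_leg f p1 p2) :=
  HG4 cospan_cat_finite (pullback_is_limit pb).

Lemma Fo_pullback_ex a b :
  Fm F f a = Fm F g b -> exists r, Fm F p1 r = a /\ Fm F p2 r = b.
Proof.
move=> fa_gb.
pose c (o : cospan_cat) (_ : unit) : Fo F (cospan_ob X Y S o) :=
  match o with Some true => a | Some false => b | None => Fm F f a end.
have [|k [k_legs _]] := @F_pb unit c.
  by move=> [[]|] [[]|] //= _ _; rewrite ?Fm_id.
by exists (k tt); split; [apply: (k_legs (Some true)) | apply: (k_legs (Some false))].
Qed.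

Lemma Fo_pullback_inj r r' :
  Fm F p1 r = Fm F p1 r' -> Fm F p2 r = Fm F p2 r' -> r = r'.
Proof.
move=> p1r p2r; have [cone _] := pullback_is_limit pb.
pose c (o : cospan_cat) (_ : unit) := Fm F (pullback_leg f p1 p2 o) r.
have [|k [_ k_uniq]] := @F_pb unit c.
  by move=> o o' u z; rewrite /c -Fm_comp cone.
rewrite (k_uniq (fun _ => r) (fun _ _ => erefl) tt); apply: esym; apply: k_uniq tt.
by case=> [[]|] z; rewrite /c /= ?Fm_comp ?p1r ?p2r.
Qed.

End FiniteLimits.

Variable arb : bool.
Hypothesis HG5 : G5 arb F.

Lemma Fo_coprod2 (A1 A2 S : C) (i1 : Hom A1 S) (i2 : Hom A2 S) :
  is_coprod2 i1 i2 -> disjoint_union (Fm F i1) (Fm F i2).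
Proof.
move=> coprod.
pose A (b : bool) : C := if b then A1 else A2.
pose i (b : bool) : Hom (A b) S := if b as b return Hom (A b) S then i1 else i2.
have coprod_i : is_coprod i.
  move=> Z h; have [k [[ki1 ki2] k_uniq]] := coprod Z (h true) (h false).
  exists k; split=> [[]|k' k'i] //; apply: k_uniq; [exact: k'i true | exact: k'i false].
have admissible_bool : admissible_index arb bool.
  by rewrite /admissible_index; case: arb => //; exists [:: true; false] => -[]; [left|right; left].
have Fcoprod := HG5.2.1 _ _ _ _ admissible_bool coprod_i.
split.
- (* Two maps [F S -> Prop] agreeing on both summands coincide. *)
  move=> s; have [k [_ k_uniq]] := Fcoprod Prop (fun _ _ => True).
  rewrite (k_uniq (fun s => (exists x, Fm F i1 x = s) \/ (exists y, Fm F i2 y = s))).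
    by rewrite -(k_uniq (fun _ => True)).
  by case=> x /=; apply: propositional_extensionality; split=> // _; [left|right]; exists x.
- move=> x x' i1x; have [k [k_i _]] := Fcoprod (option (Fo F A1))
    (fun b => if b as b return Fo F (A b) -> option (Fo F A1) then Some else fun _ => None).
  by move: (k_i true x) (k_i true x'); rewrite /= i1x => -> [].
- move=> y y' i2y; have [k [k_i _]] := Fcoprod (option (Fo F A2))
    (fun b => if b as b return Fo F (A b) -> option (Fo F A2) then fun _ => None else Some).
  by move: (k_i false y) (k_i false y'); rewrite /= i2y => -> [].
move=> x y i1x_i2y; have [k [k_i _]] := Fcoprod bool (fun b _ => b).
by move: (k_i true x) (k_i false y); rewrite /= i1x_i2y => ->.
Qed.

End FibreFacts.

(** * Consequences of the axioms G0-G6 *)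

Section ConnectedSubobject.
Variables (C : Category) (F : SetFunctor C).

Definition in_connected_subobject (K : C) (k : Fo F K) : Prop :=
  exists (M : C) (j : Hom M K) (m : Fo F M),
    [/\ nonempty M, connected M, injective (Fm F j) & Fm F j m = k].

Lemma in_connected_subobject_comp (A K : C) (i : Hom A K) (a : Fo F A) :
  injective (Fm F i) -> in_connected_subobject a -> in_connected_subobject (Fm F i a).
Proof.
move=> inj_i [M [j [m [nM cM inj_j jm]]]]; exists M, (comp i j), m.
by split=> // [x y|]; rewrite !Fm_comp ?jm // => /inj_i /inj_j.
Qed.

End ConnectedSubobject.

Section Grothendieck.
Variables (arb : bool) (C : Category) (F : SetFunctor C).
Hypotheses (HG0 : G0 F) (HG1 : G1 C) (HG2 : G2 arb C) (HG3 : G3 C) (HG4 : G4 F)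
  (HG5 : G5 arb F) (HG6 : G6 F).

Lemma initial_Fo_empty (X : C) : initial X <-> (Fo F X -> False).
Proof.
split=> [initX | emptyX]; first exact: HG5.1.
have [I initI] := HG2.1; have [u _] := initI X; have noI := HG5.1 I initI.
apply: (initial_iso initI (u := u)); apply: HG6.
by split=> [x | y]; [case: (noI x) | case: (emptyX y)].
Qed.

Lemma nonempty_inhabited (X : C) : nonempty X <-> inhabited (Fo F X).
Proof.
rewrite /nonempty; split=> [nX | [x] /initial_Fo_empty]; last exact.
by apply: NNPP => noX; apply/nX/initial_Fo_empty => x; apply: noX.
Qed.

Lemma strict_epi_to_connected (X A : C) (f : Hom X A) (x : Fo F X) :
  connected A -> strict_epi f.
Proof.
move=> connA.
have [I [e [m [epi_e [_ [-> [J [j [_ [S [i1 [i2 [u [coprod [ui1 [ui2 iso_u]]]]]]]]]]]]]]]] := HG3 f.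
have coprod_mj : is_coprod2 m j by rewrite -ui1 -ui2; apply: coprod2_iso.
have [initI | initJ] := connected_coprod2 connA coprod_mj.
  by case: (proj1 (initial_Fo_empty I) initI (Fm F e x)).
exact: strict_epi_iso_comp (coprod2_initial_iso coprod_mj initJ) epi_e.
Qed.

Lemma Fm_surjective_to_connected (X A : C) (f : Hom X A) (x : Fo F X) :
  connected A -> surjective (Fm F f).
Proof. by move=> connA; apply: HG5.2.2.2; apply: strict_epi_to_connected x connA. Qed.

Lemma connected_finite (A : C) : connected A -> finite_obj F A.
Proof.
move=> connA; have [[a] | noA] := classic (inhabited (Fo F A)); last first.
  by exists [::] => a; apply: noA.
have [Y [y [f [finY _]]]] := HG0 a.
exact: finite_type_surj (Fm_surjective_to_connected f y connA) finY.
Qed.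

Lemma pullback_finite (X Y S P : C) (f : Hom X S) (g : Hom Y S) (p1 : Hom P X) (p2 : Hom P Y) :
  is_pullback f g p1 p2 -> finite_obj F X -> finite_obj F Y -> finite_obj F P.
Proof.
move=> pb finX finY; apply: (@finite_type_inj _ _ (fun r => (Fm F p1 r, Fm F p2 r))).
  by move=> r r' [p1r p2r]; apply: (Fo_pullback_inj HG4 pb).
exact: finite_type_prod.
Qed.

Lemma not_connected_split (K : C) : ~ connected K ->
  exists (A1 A2 : C) (j1 : Hom A1 K) (j2 : Hom A2 K),
    [/\ is_coprod2 j1 j2, inhabited (Fo F A1) & inhabited (Fo F A2)].
Proof.
move=> nconnK; apply: NNPP => nsplit; apply: nconnK => A1 A2 S i1 i2 coprod [u iso_u].
apply: NNPP => /not_or_and [nA1 nA2]; apply: nsplit.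
exists A1, A2, (comp u i1), (comp u i2).
by split; [apply: coprod2_iso | apply/nonempty_inhabited..].
Qed.

(* Induction on the size of a list covering the fibre: each summand of a
   non-trivial splitting misses the points of the other one. *)
Lemma finite_obj_ind (Pr : C -> Prop) :
  (forall K, initial K -> Pr K) ->
  (forall K, nonempty K -> connected K -> Pr K) ->
  (forall K A1 A2 (j1 : Hom A1 K) (j2 : Hom A2 K), is_coprod2 j1 j2 -> Pr A1 -> Pr A2 -> Pr K) ->
  forall K, finite_obj F K -> Pr K.
Proof.
move=> Pr_init Pr_conn Pr_coprod K [s sK].
have [n] : exists n, size s <= n by exists (size s).
elim: n K s sK => [|n IHn] K s sK size_s.
  apply/Pr_init/initial_Fo_empty => k.
  by case: s sK size_s => // sK _; case: (sK k).
have [initK | nK] := classic (initial K); first exact: Pr_init.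
have [connK | nconnK] := classic (connected K); first exact: Pr_conn.
have [A1 [A2 [j1 [j2 [coprod [a1] [a2]]]]]] := not_connected_split nconnK.
have [_ inj1 inj2 disj] := Fo_coprod2 HG5 coprod.
have Pr_summand A (j : Hom A K) B (j' : Hom B K) b :
    injective (Fm F j) -> (forall a, Fm F j a <> Fm F j' b) -> Pr A.
  move=> inj_j miss_b; apply: (IHn _ (pmap (preim_opt (Fm F j)) s)).
    by move=> a; apply: In_pmap_preim_opt (sK _).
  by rewrite -ltnS; apply: leq_trans size_s; apply: size_pmap_preim_opt_lt (sK _) miss_b.
apply: (Pr_coprod K A1 A2 j1 j2 coprod).
  by apply: (Pr_summand _ j1 _ j2 a2 inj1) => a; apply: disj.
by apply: (Pr_summand _ j2 _ j1 a1 inj2) => a /esym; apply: disj.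
Qed.

Lemma in_connected_subobject_finite (K : C) (k : Fo F K) :
  finite_obj F K -> in_connected_subobject k.
Proof.
move=> finK; move: K finK k; apply: finite_obj_ind.
- by move=> K initK k; case: (proj1 (initial_Fo_empty K) initK k).
- by move=> K nK connK k; exists K, (idm K), k; split=> // [x y|]; rewrite !Fm_id.
move=> K A1 A2 j1 j2 coprod comp1 comp2 k.
have [cover inj1 inj2 _] := Fo_coprod2 HG5 coprod.
by have [[x <-] | [y <-]] := cover k; apply: in_connected_subobject_comp.
Qed.

Lemma hom_ext_connected (K : C) : finite_obj F K ->
  forall (Z : C) (s t : Hom K Z),
    (forall (M : C) (phi : Hom M K), nonempty M -> connected M -> comp s phi = comp t phi) ->
  s = t.
Proof.
move: K; apply: finite_obj_ind.
- by move=> K initK Z s t _; have [k k_uniq] := initK Z; rewrite (k_uniq s) (k_uniq t).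
- by move=> K nK connK Z s t st; have := st K (idm K) nK connK; rewrite !comp_id_r.
move=> K A1 A2 j1 j2 coprod IH1 IH2 Z s t st.
by apply: (coprod2_hom_ext coprod); [apply: IH1 | apply: IH2] => M phi nM cM;
  rewrite -!comp_assoc; apply: st.
Qed.

Lemma connected_image_in (A Y S : C) (h : Hom A S) (i : Hom Y S) a y :
  connected A -> Fm F h a = Fm F i y -> forall a', exists y', Fm F h a' = Fm F i y'.
Proof.
move=> connA ha_iy a'.
have [R [r1 [r2 pb]]] := HG1.2 A Y S h i.
have [r _] := Fo_pullback_ex HG4 pb ha_iy.
have [r' <-] := Fm_surjective_to_connected r1 r connA a'.
by exists (Fm F r2 r'); rewrite -!Fm_comp pb.1.
Qed.

Lemma connected_of_surjective (A Q : C) (q : Hom A Q) (a : Fo F A) :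
  connected A -> surjective (Fm F q) -> connected Q.
Proof.
move=> connA q_surj Q1 Q2 S i1 i2 coprod [u iso_u].
have [cover _ _ disj] := Fo_coprod2 HG5 (coprod2_iso coprod iso_u).
have other_initial B B' (j : Hom B Q) (j' : Hom B' Q) b :
    (forall x y, Fm F j x <> Fm F j' y) -> Fm F q a = Fm F j b -> initial B'.
  move=> disj_jj' qa; apply/initial_Fo_empty => b'.
  have [a' qa'] := q_surj (Fm F j' b'); have [x qx] := connected_image_in connA qa a'.
  by apply: (disj_jj' x b'); rewrite -qx qa'.
have [[x qx] | [y qy]] := cover (Fm F q a).
  by right; apply: other_initial (esym qx).
by left; apply: other_initial (esym qy) => x' y'; apply: nesym; apply: disj.
Qed.

Lemma terminal_connected (T : C) : terminal T -> connected T.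
Proof.
move=> termT T1 T2 S i1 i2 coprod [u iso_u].
have [t t_uniq] := Fo_terminal HG4 termT.
have [_ _ _ disj] := Fo_coprod2 HG5 (coprod2_iso coprod iso_u).
apply: NNPP => /not_or_and [/nonempty_inhabited [x1] /nonempty_inhabited [x2]].
exact: (disj x1 x2 (etrans (t_uniq _) (esym (t_uniq _)))).
Qed.

Lemma connected_factor (M D P : C) (j : Hom M P) (h : Hom D P) m d :
  injective (Fm F j) -> connected D -> Fm F j m = Fm F h d ->
  exists g : Hom D M, Fm F g d = m.
Proof.
move=> inj_j connD jm_hd.
have [R [r1 [r2 pb]]] := HG1.2 M D P j h.
have [r [r1r r2r]] := Fo_pullback_ex HG4 pb jm_hd.
have [psi [psi_r2 _]] : iso r2.
  apply: HG6; split; last exact: Fm_surjective_to_connected r2 r connD.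
  move=> r' r'' r2r'; apply: (Fo_pullback_inj HG4 pb) => //; apply: inj_j.
  by rewrite -!Fm_comp pb.1 !Fm_comp r2r'.
by exists (comp r1 psi); rewrite Fm_comp -r2r -(Fm_comp psi r2) psi_r2 Fm_id.
Qed.

(** * The axioms C0-C3 for non-empty connected objects *)

Section Gamma.
Variables (D : Category) (G : SetFunctor D).

Lemma Gamma_le_trans (x y z : GammaOb G) : Gamma_le x y -> Gamma_le y z -> Gamma_le x z.
Proof. by move=> [f fx] [g gy]; exists (comp g f); rewrite Fm_comp fx gy. Qed.

Lemma C3_of_top_meet2 (top : GammaOb G) :
  (forall x : GammaOb G, Gamma_le x top) ->
  (forall x y : GammaOb G, exists m : GammaOb G, [/\ Gamma_le m x, Gamma_le m y &
      forall z : GammaOb G, Gamma_le z x -> Gamma_le z y -> Gamma_le z m]) ->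
  C3 G.
Proof.
move=> le_top meet2; elim=> [|x l [m' [m'_lb m'_glb]]]; first by exists top.
have [m [mx mm' m_glb]] := meet2 x m'.
exists m; split=> [z [<- | lz] | y y_lb] //; first exact: Gamma_le_trans mm' (m'_lb z lz).
by apply: m_glb; [apply: y_lb; left | apply: m'_glb => z lz; apply: y_lb; right].
Qed.

End Gamma.

Lemma con_strict_epi (A B : ConCat C) (f : Hom A B) : strict_epi f.
Proof.
move: A B f => [A HA] [B HB] f [Z HZ] /= g g_compat.
have [[nA cA] [_ cB]] := (HA, HB).
have [a] := proj1 (nonempty_inhabited A) nA.
have [K [k1 [k2 pb]]] := HG1.2 A A B f f.
have finK := pullback_finite pb (connected_finite cA) (connected_finite cA).
have g_k1_k2 : comp g k1 = comp g k2.
  apply: (hom_ext_connected finK) => M phi nM cM; rewrite -!comp_assoc.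
  by apply: (g_compat (exist _ M (conj nM cM))); rewrite /= !comp_assoc pb.1.
apply: (strict_epi_to_connected a cB) => W u v fu_fv.
have [k [[k1k k2k] _]] := pb.2 W u v fu_fv.
by rewrite -k1k -k2k !comp_assoc g_k1_k2.
Qed.

Lemma con_C0 : C0 (ConRestr F).
Proof. by split=> [[A [nA _]] /= | A B f]; [apply/nonempty_inhabited | apply: con_strict_epi]. Qed.

Lemma con_C1 : C1 (ConRestr F).
Proof.
move=> gT [A HA] /= act act_action; have [nA cA] := HA.
have [a] := proj1 (nonempty_inhabited A) nA.
have [Q [q [q_inv q_univ]]] := HG2.2.2 gT A act act_action.
have Fquot : preserves_quotient F act q by apply: HG5.2.2.1 => //; split.
have nQ : nonempty Q by apply/nonempty_inhabited; exact: inhabits (Fm F q a).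
exists (exist _ Q (conj nQ (connected_of_surjective a cA Fquot.1))), q.
by split=> //; split=> // Z; apply: q_univ.
Qed.

Lemma con_C2 : C2 (ConRestr F).
Proof.
split=> [[A [_ cA]] /= | [A [nA _]] [B [_ cB]] /= f _]; first exact: connected_finite.
have [a] := proj1 (nonempty_inhabited A) nA.
exact: Fm_surjective_to_connected f a cB.
Qed.

Lemma con_meet2 (x y : GammaOb (ConRestr F)) :
  exists m : GammaOb (ConRestr F), [/\ Gamma_le m x, Gamma_le m y &
    forall z : GammaOb (ConRestr F), Gamma_le z x -> Gamma_le z y -> Gamma_le z m].
Proof.
case: x y => [[A HA] a] [[B HB] b]; have [[_ cA] [_ cB]] := (HA, HB).
have [T termT] := HG1.1; have [t t_uniq] := Fo_terminal HG4 termT.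
have [tA _] := termT A; have [tB _] := termT B.
have [P [p1 [p2 pb]]] := HG1.2 A B T tA tB.
have [p [p1p p2p]] :=
  Fo_pullback_ex HG4 pb (etrans (t_uniq (Fm F tA a)) (esym (t_uniq (Fm F tB b)))).
have finP := pullback_finite pb (connected_finite cA) (connected_finite cB).
have [M [j [m [nM cM inj_j jm]]]] := in_connected_subobject_finite p finP.
exists (existT _ (exist _ M (conj nM cM)) m).
split;
  [by exists (comp p1 j); rewrite /= Fm_comp jm | by exists (comp p2 j); rewrite /= Fm_comp jm
  |].
move=> [[D HD] d] [fA fAd] [fB fBd] /=; have [_ cD] := HD.
have [tD tD_uniq] := termT D.
have [h [[p1h p2h] _]] := pb.2 D fA fB (etrans (tD_uniq _) (esym (tD_uniq _))).
have hd : Fm F h d = p.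
  by apply: (Fo_pullback_inj HG4 pb); rewrite -Fm_comp ?p1h ?p2h ?fAd ?fBd ?p1p ?p2p.
exact: connected_factor inj_j cD (etrans jm (esym hd)).
Qed.

Lemma con_top : exists top : GammaOb (ConRestr F), forall y, Gamma_le y top.
Proof.
have [T termT] := HG1.1; have [t t_uniq] := Fo_terminal HG4 termT.
have nT : nonempty T by apply/nonempty_inhabited; exact: inhabits t.
exists (existT _ (exist _ T (conj nT (terminal_connected termT))) t).
by case=> [[B HB] b]; have [f _] := termT B; exists f; apply: t_uniq.
Qed.

Lemma con_C3 : C3 (ConRestr F).
Proof. by have [top le_top] := con_top; apply: C3_of_top_meet2 le_top con_meet2. Qed.

End Grothendieck.

Theorem theorem4p13 (arb : bool) (C : Category) (F : SetFunctor C) :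
  Grothendieck arb F ->
  C0 (ConRestr F) /\ C1 (ConRestr F) /\ C2 (ConRestr F) /\ C3 (ConRestr F).
Proof.
move=> [HG0 [HG1 [HG2 [HG3 [HG4 [HG5 HG6]]]]]].
split; first exact: (con_C0 HG0 HG1 HG2 HG3 HG4 HG5 HG6).
split; first exact: (con_C1 HG1 HG2 HG3 HG4 HG5 HG6).
split; first exact: (con_C2 HG0 HG2 HG3 HG5 HG6).
exact: (con_C3 HG0 HG1 HG2 HG3 HG4 HG5 HG6).
Qed.
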